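(* Let $q$ be a system of Beurling primes with Beurling integers $\{\nu_n\}_{n\geq1}$ and $\sigma_c(\zeta_q)<\infty$, and let $\varepsilon>0$ and $C_0=\sigma_c(\zeta_q)+\varepsilon$. Then for almost every $q'>1$ there are only finitely many triples $(j,n,m)\in\mathbb{N}^3$ such that $$\Bigl|(q')^j-\frac{\nu_n}{\nu_m}\Bigr|\leq \nu_n^{-C_0}\nu_m^{-C_0}.$$
   Context: A system of Beurling primes is an increasing sequence (finite or infinite) $q=\{q_n\}$ of real numbers with $q_n>1$ (and $q_n\to\infty$ if infinite) such that $\{\log q_n\}$ is linearly independent over $\mathbb{Q}$. The Beurling integers $\{\nu_n\}_{n\geq1}$ are all finite products of elements of $q$ (including $\nu_1=1$), listed in increasing order. $\zeta_q(s)=\sum_{n\geq1}\nu_n^{-s}$ and $\sigma_c(\zeta_q)$ is its abscissa of convergence. *)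

From HB Require Import structures.
From mathcomp Require Import all_boot all_order all_algebra.
From mathcomp Require Import all_classical all_reals all_analysis.
Set Implicit Arguments. Unset Strict Implicit. Unset Printing Implicit Defensive.
Import Order.TTheory GRing.Theory Num.Theory numFieldNormedType.Exports.
Local Open Scope ring_scope.
Local Open Scope classical_set_scope.

Section Beurling.
Variable R : realType.

(* A prime system is given by q : nat -> R together with its length:
   N = Some k  : finite system q 0, ..., q (k-1);
   N = None    : infinite system q 0, q 1, ... *)
Definition bidx (N : option nat) (i : nat) : bool :=
  if N is Some k then (i < k)%N else true.

Definition beurling_primes (q : nat -> R) (N : option nat) : Prop :=
  [/\ (forall i j, bidx N i -> bidx N j -> (i < j)%N -> q i < q j),
      (forall i, bidx N i -> 1 < q i),
      (N = None -> q @ \oo --> +oo)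
    &
      forall (s : seq nat) (c : nat -> rat),
        uniq s -> all (bidx N) s ->
        \sum_(i <- s) ratr (c i) * ln (q i) = 0 ->
        forall i, i \in s -> c i = 0].

Definition beurling_integer (q : nat -> R) (N : option nat) (x : R) : Prop :=
  exists s : seq nat, all (bidx N) s /\ x = \prod_(i <- s) q i.

(* nu is the list of the Beurling integers in increasing order
   (nu 0 = nu_1 = 1, nu n = nu_{n+1}). *)
Definition beurling_listing (q : nat -> R) (N : option nat) (nu : nat -> R) : Prop :=
  (forall n m, (n < m)%N -> nu n < nu m) /\
  range nu = [set x | beurling_integer q N x].

Definition zeta_converges (nu : nat -> R) (s : R) : Prop :=
  cvgn (series (fun n => nu n `^ (- s))).

Definition abscissa_conv (nu : nat -> R) : \bar R :=
  ereal_inf [set (s%:E) | s in [set s | zeta_converges nu s]].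

End Beurling.

From HB Require Import structures.
From mathcomp Require Import all_boot all_order all_algebra.
From mathcomp Require Import all_classical all_reals all_analysis.
From mathcomp Require Import ring lra.
Set Implicit Arguments. Unset Strict Implicit. Unset Printing Implicit Defensive.
Import Order.TTheory GRing.Theory Num.Theory numFieldNormedType.Exports.
Local Open Scope ring_scope.
Local Open Scope classical_set_scope.

(* Put w n = nu_n^(-C) with C = sigma_c + eps; since C exceeds the abscissa
   of convergence and nu_n >= 1, the partial sums of w are bounded by some Z.
   Fix a > 1 and consider only x > a.  For a triple t = (j, n, m), the set
   of x > a with |x^j - nu_n/nu_m| <= w n * w m lies in an interval of
   length 4 a w n w m / a^j around any of its points, because
   |x^j - y^j| >= |x - y| a^(j-1) for x, y >= a.  Let the shell K be the
   union of these intervals over all triples having K as one coordinate.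
   Summing the lengths (a geometric series in j, and the series of w in n
   and m) gives sum_K |shell K| < oo, so by Borel-Cantelli almost every
   x > a lies in only finitely many shells, i.e. admits only finitely many
   triples.  Letting a run
   through 1 + 1/(k+1) yields the theorem. *)

Section GeneralFacts.
Variable R : realType.

Lemma nneseries_le_ub (f : nat -> \bar R) (M : \bar R) :
  (forall n, (0 <= f n)%E) -> (forall K, (\sum_(0 <= i < K) f i <= M)%E) ->
  (\sum_(0 <= i <oo) f i <= M)%E.
Proof.
move=> f0 fM; apply: lime_le; first exact: is_cvg_nneseries.
by apply: nearW => K; exact: fM.
Qed.

Lemma geometric_inv_sum_le (a : R) (J : nat) : 1 < a ->
  \sum_(0 <= j < J) (a ^+ j)^-1 <= a / (a - 1).
Proof.
move=> a1; have ai0 : 0 < a^-1 by rewrite invr_gt0; lra.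
have := @geometric_le_lim R J 1 (a^-1) ler01 ai0.
rewrite gtr0_norm // invf_lt1; last lra.
have -> : series (geometric 1 a^-1) J = \sum_(0 <= j < J) (a ^+ j)^-1.
  by apply: eq_bigr => j _; rewrite /geometric /= mul1r exprVn.
have -> : 1 / (1 - a^-1) = a / (a - 1) by field; lra.
by move=> /(_ a1).
Qed.

Lemma dist_powers_ge (a x y : R) (j : nat) : 0 <= a -> a <= x -> a <= y ->
  (0 < j)%N -> `|x - y| * a ^+ j.-1 <= `|x ^+ j - y ^+ j|.
Proof.
move=> a0 ax ay; case: j => // j _.
rewrite subrXX normrM; apply: ler_wpM2l => //=.
have x0 : 0 <= x by lra. have y0 : 0 <= y by lra.
have tail_ge0 : 0 <= \sum_(i < j) x ^+ (j - bump 0 i) * y ^+ bump 0 i.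
  by apply: sumr_ge0 => i _; apply: mulr_ge0; apply: exprn_ge0.
rewrite big_ord_recl /= subn0 expr0 mulr1 ger0_norm; last first.
  by apply: addr_ge0 => //; apply: exprn_ge0.
have : a ^+ j <= x ^+ j by apply: lerXn2r.
lra.
Qed.

Lemma measure_bigcup2_le d (T : measurableType d)
    (mu : {measure set T -> \bar R}) (f : nat -> nat -> set T)
    (p q : nat -> R) (k P Q : R) :
  (forall n m, measurable (f n m)) ->
  (forall n m, (mu (f n m) <= (k * p n * q m)%:E)%E) ->
  0 <= k -> (forall n, 0 <= p n) -> (forall m, 0 <= q m) ->
  (forall N, \sum_(0 <= n < N) p n <= P) ->
  (forall M, \sum_(0 <= m < M) q m <= Q) ->
  (mu (\bigcup_n \bigcup_m f n m) <= (k * P * Q)%:E)%E.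
Proof.
move=> mf fb k0 p0 q0 hP hQ.
have mrow n : measurable (\bigcup_m f n m) by apply: bigcup_measurable.
have b0 n m : 0 <= k * p n * q m by rewrite mulr_ge0 ?mulr_ge0.
apply: le_trans (measure_sigma_subadditive _ mrow
  (bigcup_measurable (fun n _ => mrow n)) (fun x h => h)) _.
apply: (@le_trans _ _ (\sum_(0 <= n <oo) \sum_(0 <= m <oo) (k * p n * q m)%:E)%E).
  apply: lee_nneseries => n _ //.
  apply: le_trans (measure_sigma_subadditive _ (mf n) (mrow n) (fun x h => h)) _.
  by apply: lee_nneseries.
apply: nneseries_le_ub => [n|N]; first by apply: nneseries_ge0 => m _ _; rewrite lee_fin.
rewrite -nneseries_sum_nat; last by move=> i j; rewrite lee_fin.
apply: nneseries_le_ub => [m|M]; first by apply: sume_ge0 => i _; rewrite lee_fin.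
rewrite (eq_bigr (fun m => (\sum_(0 <= n < N) k * p n * q m)%:E)); last first.
  by move=> m _; rewrite sumEFin.
rewrite sumEFin lee_fin exchange_big /=.
have -> : \sum_(0 <= n < N) \sum_(0 <= m < M) (k * p n * q m) =
          k * (\sum_(0 <= n < N) p n) * (\sum_(0 <= m < M) q m).
  rewrite -mulrA mulr_suml mulr_sumr; apply: eq_bigr => n _.
  by rewrite !mulr_sumr; apply: eq_bigr => m _; rewrite mulrA.
have sp : 0 <= \sum_(0 <= n < N) p n by apply: sumr_ge0.
have sq : 0 <= \sum_(0 <= m < M) q m by apply: sumr_ge0.
by rewrite ler_pM ?mulr_ge0 // ler_pM.
Qed.

End GeneralFacts.

Section Covering.
Variables (R : realType) (nu : nat -> R) (C Z : R).

Definition weight (n : nat) : R := nu n `^ (- C).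

Hypothesis weight_sum_le : forall K, \sum_(0 <= n < K) weight n <= Z.

Definition approx_triples (x : R) : set (nat * nat * nat) :=
  [set t | (0 < t.1.1)%N /\
     `|x ^+ t.1.1 - nu t.1.2 / nu t.2| <= weight t.1.2 * weight t.2].

Definition approx_set (a : R) t : set R := [set x | a < x /\ approx_triples x t].
Definition approx_center (a : R) t : R := xget 0 (approx_set a t).
Definition approx_radius (a : R) (t : nat * nat * nat) : R :=
  2 * (weight t.1.2 * weight t.2) * a * (a ^+ t.1.1)^-1.
Definition approx_interval (a : R) t : set R :=
  [set` `[approx_center a t - approx_radius a t,
          approx_center a t + approx_radius a t]%R].

Lemma weight_ge0 n : 0 <= weight n. Proof. exact: powR_ge0. Qed.

Lemma Z_ge0 : 0 <= Z.
Proof. by have := weight_sum_le 0; rewrite big_geq. Qed.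

(* Two solutions x, y > a of the same approximation problem satisfy
   |x^j - y^j| <= 2 w_n w_m, hence |x - y| <= 2 w_n w_m / a^(j-1). *)
Lemma approx_set_sub_interval a t : 1 < a -> approx_set a t `<=` approx_interval a t.
Proof.
move=> a1 x Ex; rewrite /approx_interval /= in_itv /= -ler_distl.
have := xgetPex 0 (ex_intro _ x Ex); rewrite -/(approx_center a t).
move: (approx_center a t) => c [ac [_ hc]]; case: Ex => ax [j0 hx].
have hd := dist_powers_ge (ltW (lt_trans ltr01 a1)) (ltW ax) (ltW ac) j0.
have hxc : `|x ^+ t.1.1 - c ^+ t.1.1| <= 2 * (weight t.1.2 * weight t.2).
  have -> : x ^+ t.1.1 - c ^+ t.1.1 =
    (x ^+ t.1.1 - nu t.1.2 / nu t.2) - (c ^+ t.1.1 - nu t.1.2 / nu t.2) by ring.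
  by apply: le_trans (ler_normB _ _) _; rewrite mulr2n mulrDl mul1r lerD.
rewrite /approx_radius; move: j0 hd hxc; case: t.1.1 => // j _ /= hd hxc.
have aj : 0 < a ^+ j by apply: exprn_gt0; lra.
have -> : 2 * (weight t.1.2 * weight t.2) * a * (a ^+ j.+1)^-1 =
          2 * (weight t.1.2 * weight t.2) / a ^+ j.
  by rewrite exprS; field; rewrite gt_eqF //; lra.
by rewrite ler_pdivlMr //; apply: le_trans hxc.
Qed.

Lemma approx_interval_measure_le a j n m : 1 < a ->
  (lebesgue_measure (approx_interval a (j, n, m)) <=
   (4 * a * (a ^+ j)^-1 * weight n * weight m)%:E)%E.
Proof.
move=> a1; have r0 : 0 <= approx_radius a (j, n, m).
  rewrite /approx_radius !mulr_ge0 ?weight_ge0 ?invr_ge0 ?exprn_ge0 //; lra.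
move: r0; rewrite lebesgue_measure_itv /approx_radius /=.
by case: ifP => _ r0; rewrite lee_fin; lra.
Qed.

Definition shell (a : R) (K : nat) : set R :=
  (\bigcup_n \bigcup_m approx_interval a (K, n, m)) `|`
  (\bigcup_j \bigcup_m approx_interval a (j, K, m)) `|`
  (\bigcup_j \bigcup_n approx_interval a (j, n, K)).

Lemma approx_bigcup2_measurable a (F : nat -> nat -> nat * nat * nat) :
  measurable (\bigcup_i \bigcup_k approx_interval a (F i k)).
Proof.
by apply: bigcup_measurable => i _; apply: bigcup_measurable => k _;
   exact: measurable_itv.
Qed.

Lemma shell_measurable a K : measurable (shell a K).
Proof.
by apply: measurableU; [apply: measurableU|]; exact: approx_bigcup2_measurable.
Qed.

(* Each of the three double unions is bounded by measure_bigcup2_le: a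
   geometric series in j and the weight series in n and m. *)
Lemma shell_measure_le a K : 1 < a ->
  (lebesgue_measure (shell a K) <=
   (4 * a * (a ^+ K)^-1 * Z * Z + 4 * a * weight K * (a / (a - 1)) * Z
                                + 4 * a * weight K * (a / (a - 1)) * Z)%:E)%E.
Proof.
move=> a1; have a0 : 0 < a by lra.
have mU := approx_bigcup2_measurable a.
have inv0 j : 0 <= (a ^+ j)^-1 by rewrite invr_ge0 exprn_ge0 // ltW.
have k0 : 0 <= 4 * a * weight K by rewrite mulr_ge0 ?weight_ge0 //; lra.
have geo J := @geometric_inv_sum_le R a J a1.
have Imeas := approx_interval_measure_le _ _ _ a1.
rewrite !EFinD; apply: le_trans (measureU2 _ _ _) _;
  [apply: measurableU; exact: mU | exact: mU | apply: leeD].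
  apply: le_trans (measureU2 _ _ _) _; [exact: mU | exact: mU | apply: leeD].
- apply: (measure_bigcup2_le _ (Imeas K) _
           weight_ge0 weight_ge0 weight_sum_le weight_sum_le).
  + by move=> n m; exact: measurable_itv.
  + by apply: mulr_ge0 => //; lra.
- apply: (measure_bigcup2_le (mu := lebesgue_measure) _ _
           k0 inv0 weight_ge0 geo weight_sum_le).
  + by move=> j m; exact: measurable_itv.
  + by move=> j m; apply: le_trans (Imeas _ _ _) _; rewrite lee_fin; lra.
- apply: (measure_bigcup2_le (mu := lebesgue_measure) _ _
           k0 inv0 weight_ge0 geo weight_sum_le).
  + by move=> j n; exact: measurable_itv.
  + by move=> j n; apply: le_trans (Imeas _ _ _) _; rewrite lee_fin; lra.
Qed.

Lemma shell_measure_summable a : 1 < a ->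
  (\sum_(0 <= K <oo) lebesgue_measure (shell a K) < +oo)%E.
Proof.
move=> a1; have G0 : 0 <= a / (a - 1) by apply: divr_ge0; lra.
have Z0 := Z_ge0.
apply: (@le_lt_trans _ _ (4 * a * Z * Z * (a / (a - 1))
   + 4 * a * Z * (a / (a - 1)) * Z + 4 * a * Z * (a / (a - 1)) * Z)%:E);
  last exact: ltry.
apply: nneseries_le_ub => [K|L]; first exact: measure_ge0.
apply: le_trans; first by apply: lee_sum => K _; exact: shell_measure_le.
rewrite sumEFin lee_fin !big_split /=.
have geo := geometric_inv_sum_le L a1.
have wL := weight_sum_le L.
rewrite -!mulr_suml -!mulr_sumr.
have a0 : 0 <= 4 * a by lra.
have c1 : 0 <= 4 * a * Z * Z by do 2 apply: mulr_ge0 => //.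
have c2 : 0 <= 4 * a * (a / (a - 1)) * Z by do 2 apply: mulr_ge0 => //.
have := ler_wpM2l c1 geo; have := ler_wpM2l c2 wL.
lra.
Qed.

(* Borel-Cantelli: almost every x > a lies in finitely many shells, and a
   point outside the shells of index >= K0 only admits triples < K0. *)
Lemma infinitely_approximable_negligible a : 1 < a ->
  lebesgue_measure.-negligible [set x | a < x /\ ~ finite_set (approx_triples x)].
Proof.
move=> a1; exists (lim_sup_set (shell a)); split.
- apply: bigcap_measurable => [|k _]; first by exists 0.
  by apply: bigcup_measurable => j _; exact: shell_measurable.
- apply: lim_sup_set_cvg0; first exact: shell_measurable.
  exact: shell_measure_summable.
move=> x [ax infinite_x] K0 _; apply: contrapT => not_in_shells.
apply: infinite_x; apply: (@sub_finite_set _ _ (`I_K0 `*` `I_K0 `*` `I_K0)); last first.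
  by apply: finite_setX; [apply: finite_setX|]; exact: finite_II.
move=> [[j n] m] hx.
have in_I : approx_interval a (j, n, m) x by apply: approx_set_sub_interval.
have out K : (K0 <= K)%N -> ~ shell a K x by move=> hK hG; apply: not_in_shells; exists K.
split; [split|]; rewrite /= ltnNge; apply/negP => hK.
- by apply: (out j hK); left; left; exists n => //; exists m.
- by apply: (out n hK); left; right; exists j => //; exists m.
- by apply: (out m hK); right; exists j => //; exists n.
Qed.

End Covering.

Section BeurlingFacts.
Variable R : realType.

(* Products of Beurling primes (all > 1) are >= 1. *)
Lemma beurling_listing_ge1 (q : nat -> R) N nu :
  beurling_primes q N -> beurling_listing q N nu -> forall n, 1 <= nu n.
Proof.
case=> _ q_gt1 _ _ [_ range_nu] n.
have : [set x | beurling_integer q N x] (nu n) by rewrite -range_nu; exists n.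
case=> s [+ ->]; elim: s => [|i s IH]; first by rewrite big_nil.
by rewrite /= big_cons => /andP [hi hs]; rewrite mulr_ege1 ?IH ?ltW ?q_gt1.
Qed.

Lemma converging_exponent_near_abscissa (nu : nat -> R) (eps : R) :
  (abscissa_conv nu < +oo)%E -> 0 < eps ->
  exists2 s, zeta_converges nu s & s <= fine (abscissa_conv nu) + eps.
Proof.
rewrite /abscissa_conv; case E: (ereal_inf _) => [r| |] // _ eps0.
- have : (ereal_inf [set s%:E | s in [set s | zeta_converges nu s]] < (r + eps)%:E)%E.
    by rewrite E lte_fin ltrDl.
  move=> /ereal_inf_lt [_ [s hs <-]]; rewrite lte_fin => h.
  by exists s => //; rewrite ltW.
- have : (ereal_inf [set s%:E | s in [set s | zeta_converges nu s]] < eps%:E)%E.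
    by rewrite E ltNyr.
  move=> /ereal_inf_lt [_ [s hs <-]]; rewrite lte_fin => h.
  by exists s => //=; rewrite add0r ltW.
Qed.

Lemma zeta_partial_sums_le (nu : nat -> R) (s C : R) :
  (forall n, 1 <= nu n) -> zeta_converges nu s -> s <= C ->
  forall K, \sum_(0 <= n < K) nu n `^ (- C) <= limn (series (fun n => nu n `^ (- s))).
Proof.
move=> nu_ge1 conv_s sC K; apply: le_trans (nondecreasing_cvgn_le _ conv_s K).
- by apply: ler_sum => n _; rewrite ler_powR // lerN2.
- by apply: nondecreasing_series => n _ _; exact: powR_ge0.
Qed.

End BeurlingFacts.

Theorem mainTheorem3 (R : realType) (q : nat -> R) (N : option nat)
  (hq : beurling_primes q N) (nu : nat -> R) (hnu : beurling_listing q N nu)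
  (hfin : (abscissa_conv nu < +oo)%E) (eps : R) (heps : 0 < eps) :
  {ae (@lebesgue_measure R), forall x : R, 1 < x ->
     finite_set [set t : nat * nat * nat |
        (0 < t.1.1)%N /\
        `| x ^+ t.1.1 - nu t.1.2 / nu t.2 | <=
          nu t.1.2 `^ (- (fine (abscissa_conv nu) + eps)) *
          nu t.2 `^ (- (fine (abscissa_conv nu) + eps))]}.
Proof.
set C := fine (abscissa_conv nu) + eps.
have [s conv_s sC] := converging_exponent_near_abscissa hfin heps.
have weights_le := zeta_partial_sums_le (beurling_listing_ge1 hq hnu) conv_s sC.
have bad_negligible : lebesgue_measure.-negligible (\bigcup_k
    [set x | 1 + k.+1%:R^-1 < x /\ ~ finite_set (approx_triples nu C x)]).
  apply: negligible_bigcup => k.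
  apply: (infinitely_approximable_negligible weights_le).
  by rewrite ltrDl invr_gt0.
apply: negligibleS bad_negligible => x /= /not_implyP [x_gt1 infinite_x].
have [k hk] := ltr_add_invr x_gt1.
by exists k.
Qed.
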